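(* Consider the binary asymmetric channel with a single error and one-time feedback, with $n=n_1+n_2$. Suppose that for each $w\in\{0,1,\ldots,n_1\}$ there is a nonadaptive code of length $n_2$ correcting one asymmetric error with $M_w$ codewords and $F_w$ free points, and assign this code to every input sequence $u\in\{0,1\}^{n_1}$ of Hamming weight $w$ (so that $M(u)=M_w$ and $F(u)=F_w$ depend only on the weight of $u$). If $$(n_1-w)M_{w+1}\le F_w\quad\text{for all } w\in[0,n_1-1],$$ then a single-error-correcting strategy of length $n$ with one-time feedback after the first $n_1$ symbols transmits $$M=\sum_{w=0}^{n_1}\binom{n_1}{w}M_w$$ messages.
   Context: Binary asymmetric channel: alphabet $\{0,1\}$; a transmitted 1 may be received as 0, while a transmitted 0 is always received correctly; ''a single error'' means at most one such error in the whole transmission. A strategy with one-time feedback after $n_1$ symbols for messages $m\in[M]$: the first $n_1$ transmitted symbols depend only on $m$; then the encoder learns the $n_1$ received symbols (error-free, instantaneously), and the remaining $n_2$ symbols depend on $m$ and those received symbols; it transmits $M$ messages if the sets of output sequences reachable from distinct messages with at most one error are pairwise disjoint. A nonadaptive code of length $n_2$ correcting one asymmetric error is a set of codewords in $\{0,1\}^{n_2}$ whose clouds (sets of words obtainable from the codeword by at most one $1\to0$ change) are pairwise disjoint; its free points are the words of $\{0,1\}^{n_2}$ in no cloud. *)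

From mathcomp Require Import all_boot.
Set Implicit Arguments. Unset Strict Implicit. Unset Printing Implicit Defensive.

Definition word (n : nat) := {ffun 'I_n -> bool}.

Definition flip0 (n : nat) (x : word n) (i : 'I_n) : word n :=
  [ffun j => if j == i then false else x j].

Definition cloud (n : nat) (x : word n) : {set word n} :=
  [set y | (y == x) || [exists i, x i && (y == flip0 x i)]].

Definition asym_code (n : nat) (C : {set word n}) : Prop :=
  forall c c', c \in C -> c' \in C -> c != c' -> [disjoint cloud c & cloud c'].

Definition free_points (n : nat) (C : {set word n}) : {set word n} :=
  [set y | [forall c in C, y \notin cloud c]].

(* Output pairs (received first block, received second block) reachable with at
   most one error in the whole transmission, when the first block sent is x1
   and the second block sent after feedback of the received first block y1 is g y1. *)
Definition outputs (n1 n2 : nat) (x1 : word n1) (g : word n1 -> word n2)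
  : {set (word n1 * word n2)} :=
  [set p | (p.1 \in cloud x1) &&
           (p.2 \in (if p.1 == x1 then cloud (g x1) else [set g p.1]))].

Definition transmits (n1 n2 M : nat) (f1 : 'I_M -> word n1)
  (f2 : 'I_M -> word n1 -> word n2) : Prop :=
  forall m m' : 'I_M, m != m' ->
    [disjoint outputs (f1 m) (f2 m) & outputs (f1 m') (f2 m')].

(* A message is a pair (u, c) with c a codeword of C_(weight u).  The encoder sends
   u, and if the feedback shows u arrived intact it sends c, protected by C_(weight u)
   against the one error still possible.  Otherwise the error turned u into a word y
   of weight (weight u) - 1 and the second block will arrive intact, so it suffices
   to send a free point of C_(weight y), chosen injectively in the message: free
   points lie outside the clouds used by the messages whose first block is y.  At
   most (n1 - weight y) |C_(weight y + 1)| messages can be received as y, which is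
   exactly what the hypothesis on the free points accommodates. *)

From mathcomp Require Import all_boot.
Set Implicit Arguments. Unset Strict Implicit. Unset Printing Implicit Defensive.

Section Embedding.
Variables (T U : finType) (A : {set T}) (B : {set U}) (default : U).
Hypothesis leq_AB : #|A| <= #|B|.

Definition embed_set (x : T) : U := nth default (enum B) (index x (enum A)).

Lemma index_enum_lt_card x : x \in A -> index x (enum A) < size (enum B).
Proof.
by move=> xA; rewrite -cardE (leq_trans _ leq_AB) // cardE index_mem mem_enum.
Qed.

Lemma embed_set_in x : x \in A -> embed_set x \in B.
Proof. by move=> xA; rewrite -mem_enum mem_nth ?index_enum_lt_card. Qed.

Lemma embed_set_inj : {in A &, injective embed_set}.
Proof.
move=> x y xA yA /eqP.
rewrite nth_uniq ?index_enum_lt_card ?enum_uniq // => /eqP same_index.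
by rewrite -(nth_index x (_ : x \in enum A)) ?same_index ?nth_index ?mem_enum.
Qed.

End Embedding.

Section Words.
Variable n : nat.

Definition weight (u : word n) := #|[set i | u i]|.

Definition flip1 (y : word n) (i : 'I_n) : word n := [ffun j => (j == i) || y j].

Definition parents (y : word n) : {set word n} :=
  [set u : word n | [exists i, u i && (y == flip0 u i)]].

Lemma weight_le (u : word n) : weight u <= n.
Proof. by rewrite /weight (leq_trans (max_card _)) ?card_ord. Qed.

Lemma card_zeros (y : word n) : #|[set i | ~~ y i]| = n - weight y.
Proof.
have <- : ~: [set i | y i] = [set i | ~~ y i] by apply/setP => i; rewrite !inE.
by rewrite cardsCs setCK card_ord.
Qed.

Lemma flip0_self (u : word n) (i : 'I_n) : flip0 u i i = false.
Proof. by rewrite ffunE eqxx. Qed.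

Lemma flip0K (u : word n) (i : 'I_n) : u i -> flip1 (flip0 u i) i = u.
Proof.
by move=> ui; apply/ffunP => j; rewrite !ffunE; case: eqP => [->|].
Qed.

Lemma weight_flip0 (u : word n) (i : 'I_n) :
  u i -> weight u = (weight (flip0 u i)).+1.
Proof.
move=> ui; rewrite /weight -[in LHS](flip0K ui).
have -> : [set j | flip1 (flip0 u i) i j] = i |: [set j | flip0 u i j].
  by apply/setP => j; rewrite !inE ffunE.
by rewrite cardsU1 inE flip0_self.
Qed.

Lemma weight_parent (u y : word n) :
  u \in parents y -> weight u = (weight y).+1.
Proof. by rewrite inE => /existsP[i /andP[ui /eqP ->]]; apply: weight_flip0. Qed.

Lemma card_parents (y : word n) : #|parents y| <= n - weight y.
Proof.
rewrite -card_zeros (leq_trans _ (leq_imset_card (flip1 y) _)) //.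
apply/subset_leq_card/subsetP => u; rewrite inE => /existsP[i /andP[ui /eqP ->]].
by apply/imsetP; exists i; rewrite ?inE ?flip0_self ?flip0K.
Qed.

Lemma cloud_parents (u y : word n) :
  (y \in cloud u) = (y == u) || (u \in parents y).
Proof. by rewrite !inE. Qed.

Lemma card_weight w : #|[set u | weight u == w]| = 'C(n, w).
Proof.
have support_inj : injective (fun u : word n => [set i | u i]).
  by move=> u v /setP same; apply/ffunP => i; have := same i; rewrite !inE.
rewrite -[in RHS](card_ord n) -card_draws -(card_imset _ support_inj).
apply: eq_card => A; rewrite !inE; apply/imsetP/idP => [[u] | /eqP <-].
  by rewrite inE => /eqP <- ->.
exists [ffun i => i \in A]; last by apply/setP => i; rewrite !inE ffunE.
by rewrite inE; apply/eqP/eq_card => i; rewrite !inE ffunE.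
Qed.

Lemma sum_by_weight (F : nat -> nat) :
  \sum_(u : word n) F (weight u) = \sum_(w < n.+1) 'C(n, w) * F w.
Proof.
rewrite (partition_big (fun u => inord (weight u) : 'I_n.+1) xpredT) //=.
apply: eq_bigr => w _; rewrite -card_weight -sum_nat_const.
apply: eq_big => [u | u /eqP <-]; last by rewrite inordK ?ltnS ?weight_le.
by rewrite inE -(inj_eq val_inj) /= inordK ?ltnS ?weight_le.
Qed.

End Words.

Lemma card_dep_pairs (T U : finType) (S : T -> {set U}) :
  #|[set p : T * U | p.2 \in S p.1]| = \sum_x #|S x|.
Proof.
rewrite -sum1_card (eq_bigl (fun p => xpredT p.1 && (p.2 \in S p.1))) => [|p].
  rewrite -(pair_big_dep xpredT (fun x y => y \in S x) (fun _ _ => 1)).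
  by apply: eq_bigr => x _; rewrite sum1_card.
by rewrite inE.
Qed.

Section Strategy.
Variables (n1 n2 : nat) (C : nat -> {set word n2}).
Hypothesis C_code : forall w, w <= n1 -> asym_code (C w).
Hypothesis C_room :
  forall w, w < n1 -> (n1 - w) * #|C w.+1| <= #|free_points (C w)|.

Definition messages := [set p : word n1 * word n2 | p.2 \in C (weight p.1)].

Lemma in_messages p : (p \in messages) = (p.2 \in C (weight p.1)).
Proof. by rewrite inE. Qed.

Definition relayed (y : word n1) := [set p in messages | p.1 \in parents y].

Lemma in_relayed y p :
  (p \in relayed y) = (p \in messages) && (p.1 \in parents y).
Proof. by rewrite inE. Qed.

Definition relay (y : word n1) : word n1 * word n2 -> word n2 :=
  embed_set (relayed y) (free_points (C (weight y))) [ffun=> false].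

Definition second_block (p : word n1 * word n2) (y : word n1) : word n2 :=
  if y == p.1 then p.2 else relay y p.

Lemma card_messages : #|messages| = \sum_(w < n1.+1) 'C(n1, w) * #|C w|.
Proof.
rewrite (card_dep_pairs (fun u => C (weight u))).
exact: (sum_by_weight n1 (fun w => #|C w|)).
Qed.

Lemma card_relayed y : #|relayed y| <= #|free_points (C (weight y))|.
Proof.
have sub_relayed : relayed y \subset setX (parents y) (C (weight y).+1).
  apply/subsetP => -[u c]; rewrite in_relayed => /andP[cC uy].
  by rewrite in_setX uy -(weight_parent uy) -(in_messages (u, c)).
rewrite (leq_trans (subset_leq_card sub_relayed)) // cardsX.
case: (ltnP (weight y) n1) => [lt_y | ge_y].
  exact: leq_trans (leq_mul (card_parents y) (leqnn _)) (C_room lt_y).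
by have := card_parents y; rewrite (eqP ge_y) leqn0 => /eqP ->.
Qed.

Lemma outputs_second_block p y z : (y, z) \in outputs p.1 (second_block p) ->
  (y == p.1) && (z \in cloud p.2) || (p.1 \in parents y) && (z == relay y p).
Proof.
rewrite inE /= cloud_parents /second_block eqxx.
case: (eqVneq y p.1) => [-> -> // | _] /=.
by rewrite in_set1.
Qed.

Lemma relay_not_cloud p p' : p \in messages -> p' \in messages ->
  p'.1 \in parents p.1 -> relay p.1 p' \notin cloud p.2.
Proof.
move=> pM p'M p'p; have p'_relayed : p' \in relayed p.1 by rewrite in_relayed p'M.
have := embed_set_in [ffun=> false] (card_relayed p.1) p'_relayed.
by rewrite inE => /forall_inP; apply; rewrite -in_messages.
Qed.

Lemma outputs_disjoint p p' : p \in messages -> p' \in messages -> p != p' ->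
  [disjoint outputs p.1 (second_block p) & outputs p'.1 (second_block p')].
Proof.
move=> pM p'M pp'; rewrite -setI_eq0; apply/eqP/setP => -[y z].
rewrite in_setI in_set0; apply/negP.
move=> /andP[/outputs_second_block + /outputs_second_block].
case/orP => [/andP[/eqP-> zp] | /andP[py /eqP->]].
  case/orP => [/andP[/eqP pp'1 zp'] | /andP[p'p /eqP zp']].
    have ne_c : p.2 != p'.2.
      by apply: contra pp' => /eqP pp'2; apply/eqP/injective_projections.
    move: pM p'M; rewrite !in_messages pp'1 => pM p'M.
    by have /disjointFr/(_ zp) := C_code (weight_le p'.1) pM p'M ne_c; rewrite zp'.
  by rewrite zp' (negbTE (relay_not_cloud pM p'M p'p)) in zp.
case/orP => [/andP[/eqP yp' zp] | /andP[p'y /eqP zp]].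
  by rewrite yp' in py zp; rewrite (negbTE (relay_not_cloud p'M pM py)) in zp.
have p_relayed : p \in relayed y by rewrite in_relayed pM py.
have p'_relayed : p' \in relayed y by rewrite in_relayed p'M p'y.
by rewrite (embed_set_inj (card_relayed y) p_relayed p'_relayed zp) eqxx in pp'.
Qed.

End Strategy.

Theorem corollary2 (n1 n2 : nat) (C : nat -> {set word n2}) :
  (forall w, w <= n1 -> asym_code (C w)) ->
  (forall w, w < n1 -> (n1 - w) * #|C w.+1| <= #|free_points (C w)|) ->
  exists (f1 : 'I_(\sum_(w < n1.+1) 'C(n1, w) * #|C w|) -> word n1)
         (f2 : 'I_(\sum_(w < n1.+1) 'C(n1, w) * #|C w|) -> word n1 -> word n2),
    transmits f1 f2.
Proof.
move=> C_code C_room.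
pose message m := enum_val (cast_ord (esym (card_messages n1 C)) m).
exists (fun m => (message m).1), (fun m => second_block C (message m)).
move=> m m' ne_m; apply: (outputs_disjoint C_code C_room); rewrite ?enum_valP //.
by apply: contra ne_m => /eqP/enum_val_inj/cast_ord_inj ->.
Qed.
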